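(* Let $S$ be a (left and right) Ore set in a ring $R$. Then there exists a pair $(Q,f)$, with $Q$ a ring and $f:R\to Q$ a ring homomorphism, such that (i) $f(s)$ is a unit of $Q$ for all $s\in S$, and for every pair $(Q',f')$ satisfying (i) there is a unique ring homomorphism $h:Q\to Q'$ with $f'=hf$. The ring $Q$ is unique up to isomorphism and is isomorphic to the localization of $R/\mathfrak p(S)$ at $\pi(S)$, where $\pi:R\to R/\mathfrak p(S)$ is the canonical map and $\pi(S)$ is a left and right denominator set of $R/\mathfrak p(S)$ consisting of regular elements.
   Context: Rings are associative with $1$. A multiplicatively closed subset $S$ ($1\in S$, $0\notin S$) is an Ore set if $Sr\cap Rs\ne\emptyset$ and $rS\cap sR\ne\emptyset$ for all $r\in R,s\in S$; a (left and right) denominator set is an Ore set such that $rs=0$ ($s\in S$) implies $tr=0$ for some $t\in S$ and $sr=0$ implies $rt=0$ for some $t\in S$. For a ring $B$ and $T\subseteq B$, $\mathrm{ass}_l(T,B):=\{b\mid tb=0\text{ for some }t\in T\}$, $\mathrm{ass}_r(T,B):=\{b\mid bt=0\text{ for some }t\in T\}$. Define ideals $\mathfrak p_\alpha$ ($\alpha\ge1$ ordinals): $\mathfrak p_1:=\mathrm{ass}_l(S,R)+\mathrm{ass}_r(S,R)$; $\mathfrak p_{\alpha+1}:=\pi_\alpha^{-1}(\mathrm{ass}_l(\pi_\alpha(S),R/\mathfrak p_\alpha)+\mathrm{ass}_r(\pi_\alpha(S),R/\mathfrak p_\alpha))$ with $\pi_\alpha:R\to R/\mathfrak p_\alpha$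 canonical; $\mathfrak p_\alpha:=\bigcup_{\beta<\alpha}\mathfrak p_\beta$ for limit $\alpha$; $\mathfrak p(S):=\bigcup_\alpha\mathfrak p_\alpha$. *)

(* Rings: associative with 1, not necessarily commutative
   (pzRingType allows the zero ring). Subsets of a ring are Prop-predicates. *)
From HB Require Import structures.
From mathcomp Require Import all_boot all_algebra.
Set Implicit Arguments. Unset Strict Implicit. Unset Printing Implicit Defensive.
Import GRing.Theory.
Local Open Scope ring_scope.

Definition is_unit (Q : pzRingType) (u : Q) : Prop :=
  exists v : Q, u * v = 1 /\ v * u = 1.

Definition mult_closed (R : pzRingType) (S : R -> Prop) : Prop :=
  [/\ S 1, ~ S 0 & forall s t, S s -> S t -> S (s * t)].

Definition ore_set (R : pzRingType) (S : R -> Prop) : Prop :=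
  mult_closed S /\
  forall (r s : R), S s ->
    (exists s' r', S s' /\ s' * r = r' * s) /\
    (exists s' r', S s' /\ r * s' = s * r').

Definition denominator_set (R : pzRingType) (S : R -> Prop) : Prop :=
  ore_set S /\
  forall (r s : R), S s ->
    (r * s = 0 -> exists t, S t /\ t * r = 0) /\
    (s * r = 0 -> exists t, S t /\ r * t = 0).

Definition regular (R : pzRingType) (a : R) : Prop :=
  forall x : R, (a * x = 0 -> x = 0) /\ (x * a = 0 -> x = 0).

(* The ideal p(S) = \bigcup_alpha p_alpha.  It is encoded as the least subset
   containing 0 = p_0 and closed under the successor step
     p_{alpha+1} = pi_alpha^{-1}(ass_l(pi_alpha S) + ass_r(pi_alpha S)),
   i.e. x is added when x = a + b modulo the current set, with s a and b t in
   the current set for some s, t in S.  The least such set is the union of the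
   transfinite chain (limits are unions). *)
Inductive pS (R : pzRingType) (S : R -> Prop) : R -> Prop :=
| pS_zero : pS S 0
| pS_step (x a b s t : R) :
    S s -> S t -> pS S (x - (a + b)) -> pS S (s * a) -> pS S (b * t) ->
    pS S x.

Definition S_inverting (R : pzRingType) (S : R -> Prop) (Q : pzRingType)
  (f : {rmorphism R -> Q}) : Prop :=
  forall s, S s -> is_unit (f s).

Definition universal_S_inverting (R : pzRingType) (S : R -> Prop)
  (Q : pzRingType) (f : {rmorphism R -> Q}) : Prop :=
  S_inverting S f /\
  forall (Q' : pzRingType) (f' : {rmorphism R -> Q'}), S_inverting S f' ->
    exists h : {rmorphism Q -> Q'},
      (forall r, f' r = h (f r)) /\
      (forall h' : {rmorphism Q -> Q'}, (forall r, f' r = h' (f r)) ->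
         forall q, h' q = h q).

Definition ring_isomorphic (Q Q' : pzRingType) : Prop :=
  exists h : {rmorphism Q -> Q'}, bijective h.

Definition is_localization (A : pzRingType) (T : A -> Prop) (B : pzRingType)
  (phi : {rmorphism A -> B}) : Prop :=
  [/\ forall t, T t -> is_unit (phi t),
      forall b : B, exists a t u, [/\ T t, phi t * u = 1, u * phi t = 1 &
                                      b = phi a * u],
      forall b : B, exists a t u, [/\ T t, phi t * u = 1, u * phi t = 1 &
                                      b = u * phi a],
      forall a, phi a = 0 <-> exists t, T t /\ a * t = 0 &
      forall a, phi a = 0 <-> exists t, T t /\ t * a = 0].

Definition image_of (R A : Type) (g : R -> A) (S : R -> Prop) : A -> Prop :=
  fun a => exists s, S s /\ g s = a.

(* Modulo the ideal p(S) every s in S becomes regular (s x or x s in p(S)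
   forces x in p(S)), and by the Ore conditions p(S) is a two-sided ideal all
   of whose elements are annihilated on both sides by elements of S, so it
   misses S. Every ring morphism inverting S kills p(S): if f(s) is a unit
   and f(s a) = 0 then f(a) = 0. The universal S-inverting ring is therefore
   the ring of right fractions a s^-1 of R/p(S), built here directly on pairs
   (a, s) with s in S; the Ore conditions give common denominators, hence
   sums, products and well-definedness. The image of S in R/p(S) is an Ore
   set of regular elements, hence a denominator set, and the fraction ring is
   its localization. *)

From HB Require Import structures.
From mathcomp Require Import all_boot all_algebra.
From mathcomp Require Import boolp classical_sets.
Import GRing.Theory.
Set Implicit Arguments. Unset Strict Implicit.
Local Open Scope ring_scope.

Section Units.
Variable Q : pzRingType.

Definition uinv (u : Q) : Q := xget 0 (fun v => u * v = 1 /\ v * u = 1).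

Lemma uinvP u : is_unit u -> u * uinv u = 1 /\ uinv u * u = 1.
Proof. exact: (@xgetPex _ 0 (fun v => u * v = 1 /\ v * u = 1)). Qed.

Lemma uinv_eqr u v : is_unit u -> u * v = 1 -> uinv u = v.
Proof.
move=> Uu uv1; have [_ uVu] := uinvP Uu.
by rewrite -[uinv u]mulr1 -uv1 mulrA uVu mul1r.
Qed.

Lemma uinv_eql u v : is_unit u -> v * u = 1 -> uinv u = v.
Proof.
move=> Uu vu1; have [uuV _] := uinvP Uu.
by rewrite -[uinv u]mul1r -vu1 -mulrA uuV mulr1.
Qed.

Lemma uinvM u t : is_unit u -> is_unit t -> uinv (u * t) = uinv t * uinv u.
Proof.
move=> Uu Ut; have [uuV uVu] := uinvP Uu; have [ttV tVt] := uinvP Ut.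
have Uut : is_unit (u * t).
  exists (uinv t * uinv u).
  by rewrite -mulrA (mulrA t) ttV mul1r uuV -mulrA (mulrA (uinv u)) uVu mul1r.
by apply: uinv_eqr => //; rewrite -mulrA (mulrA t) ttV mul1r.
Qed.

Lemma uinv_commute s t b b' : is_unit s -> is_unit t -> b * t = s * b' ->
  uinv s * b = b' * uinv t.
Proof.
move=> Us Ut E; have [_ sVs] := uinvP Us; have [ttV _] := uinvP Ut.
by rewrite -[LHS]mulr1 -ttV mulrA -(mulrA _ b) E mulrA sVs mul1r.
Qed.

End Units.

Lemma S_inverting_pS_eq0 (R Q : pzRingType) (S : R -> Prop) (f : {rmorphism R -> Q}) x :
  S_inverting S f -> pS S x -> f x = 0.
Proof.
move=> Sinv; elim=> {x} [|x a b s t Ss St _ fx0 _ fsa0 _ fbt0]; first exact: rmorph0.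
have fa0 : f a = 0.
  have [_ sVs] := uinvP (Sinv _ Ss).
  by rewrite -[f a]mul1r -sVs -mulrA -rmorphM fsa0 mulr0.
have fb0 : f b = 0.
  have [ttV _] := uinvP (Sinv _ St).
  by rewrite -[f b]mulr1 -ttV mulrA -rmorphM fbt0 mul0r.
by move: fx0; rewrite rmorphB rmorphD fa0 fb0 addr0 subr0.
Qed.

Section OreSet.
Variables (R : pzRingType) (S : R -> Prop).
Hypothesis oreS : ore_set S.

Lemma ore1 : S 1. Proof. by case: oreS => -[]. Qed.
Lemma ore_neq0 : ~ S 0. Proof. by case: oreS => -[]. Qed.
Lemma oreM s t : S s -> S t -> S (s * t).
Proof. by case: oreS => -[_ _ mulS] _; apply: mulS. Qed.

Lemma ore_condl r s : S s -> exists s' r', S s' /\ s' * r = r' * s.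
Proof. by case: oreS => _ ore Ss; case: (ore r s Ss). Qed.

Lemma ore_condr r s : S s -> exists s' r', S s' /\ r * s' = s * r'.
Proof. by case: oreS => _ ore Ss; case: (ore r s Ss). Qed.

Lemma ore_common_left s u : S s -> S u -> exists c d, S (c * s) /\ c * s = d * u.
Proof.
move=> Ss Su; have [c [d [Sc E]]] := ore_condl s Su.
by exists c, d; split; first exact: oreM.
Qed.

Lemma ore_common_right s u : S s -> S u -> exists c d, S (s * c) /\ s * c = u * d.
Proof.
move=> Ss Su; have [c [d [Sc E]]] := ore_condr s Su.
by exists c, d; split; first exact: oreM.
Qed.

Lemma pSD x y : pS S x -> pS S y -> pS S (x + y).
Proof.
move=> px py; apply: (pS_step (a := x) (b := y) ore1 ore1); rewrite ?mul1r ?mulr1 //.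
by rewrite subrr; exact: pS_zero.
Qed.

Lemma pSMl r x : pS S x -> pS S (r * x).
Proof.
move=> px; elim: px r => {x} [|x a b s t Ss St _ IHx _ IHa _ IHb] r.
  by rewrite mulr0; exact: pS_zero.
have [s' [r' [Ss' E]]] := ore_condl r Ss.
apply: (pS_step (a := r * a) (b := r * b) Ss' St).
- by rewrite -mulrDr -mulrBr; apply: IHx.
- by rewrite mulrA E -mulrA; apply: IHa.
- by rewrite -mulrA; apply: IHb.
Qed.

Lemma pSMr r x : pS S x -> pS S (x * r).
Proof.
move=> px; elim: px r => {x} [|x a b s t Ss St _ IHx _ IHa _ IHb] r.
  by rewrite mul0r; exact: pS_zero.
have [t' [r' [St' E]]] := ore_condr r St.
apply: (pS_step (a := a * r) (b := b * r) Ss St').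
- by rewrite -mulrDl -mulrBl; apply: IHx.
- by rewrite mulrA; apply: IHa.
- by rewrite -mulrA E mulrA; apply: IHb.
Qed.

Lemma pSN x : pS S x -> pS S (- x).
Proof. by rewrite -mulN1r; apply: pSMl. Qed.

Lemma pS_cancell s x : S s -> pS S (s * x) -> pS S x.
Proof.
move=> Ss psx; apply: (pS_step (a := x) (b := 0) Ss ore1) => //.
  by rewrite addr0 subrr; exact: pS_zero.
by rewrite mul0r; exact: pS_zero.
Qed.

Lemma pS_cancelr s x : S s -> pS S (x * s) -> pS S x.
Proof.
move=> Ss pxs; apply: (pS_step (a := 0) (b := x) ore1 Ss) => //.
  by rewrite add0r subrr; exact: pS_zero.
by rewrite mulr0; exact: pS_zero.
Qed.

Definition S_annihilated x := exists u v, [/\ S u, S v & u * x * v = 0].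

Lemma S_annihilatedD x y : S_annihilated x -> S_annihilated y -> S_annihilated (x + y).
Proof.
move=> [u1 [v1 [Su1 Sv1 x0]]] [u2 [v2 [Su2 Sv2 y0]]].
have [c1 [c2 [Su Eu]]] := ore_common_left Su1 Su2.
have [d1 [d2 [Sv Ev]]] := ore_common_right Sv1 Sv2.
exists (c1 * u1), (v1 * d1); split => //.
rewrite mulrDr mulrDl {2}Eu {2}Ev -!mulrA (mulrA x) (mulrA y) !(mulrA u1) !(mulrA u2).
by rewrite x0 y0 !mul0r !mulr0 addr0.
Qed.

Lemma S_annihilated_cancell s x : S s -> S_annihilated (s * x) -> S_annihilated x.
Proof.
move=> Ss [u [v [Su Sv E]]]; exists (u * s), v.
by split; [exact: oreM | | rewrite -(mulrA u)].
Qed.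

Lemma S_annihilated_cancelr s x : S s -> S_annihilated (x * s) -> S_annihilated x.
Proof.
move=> Ss [u [v [Su Sv E]]]; exists u, (s * v).
by split; [| exact: oreM | rewrite mulrA -(mulrA u)].
Qed.

Lemma pS_annihilated x : pS S x -> S_annihilated x.
Proof.
elim=> {x} [|x a b s t Ss St _ Hx _ Ha _ Hb].
  by exists 1, 1; split; rewrite ?mulr1 ?mulr0 //; exact: ore1.
rewrite -[x](subrK (a + b)) addrA.
apply: S_annihilatedD; last exact: S_annihilated_cancelr Hb.
by apply: S_annihilatedD; last exact: S_annihilated_cancell Ha.
Qed.

Lemma pS_disjoint s : S s -> ~ pS S s.
Proof.
move=> Ss /pS_annihilated [u [v [Su Sv E]]]; apply: ore_neq0.
by rewrite -E; apply: oreM => //; apply: oreM.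
Qed.

Lemma pS_sub_eq x y : x = y -> pS S (x - y).
Proof. by move->; rewrite subrr; exact: pS_zero. Qed.

Lemma pS_subC x y : pS S (x - y) -> pS S (y - x).
Proof. by move=> pxy; rewrite -opprB; apply: pSN. Qed.

Lemma pS_sub_trans y x z : pS S (x - y) -> pS S (y - z) -> pS S (x - z).
Proof. by move=> pxy pyz; have := pSD pxy pyz; rewrite addrA subrK. Qed.

Lemma pS_subMl r x y : pS S (x - y) -> pS S (r * x - r * y).
Proof. by rewrite -mulrBr; apply: pSMl. Qed.

Lemma pS_subMr r x y : pS S (x - y) -> pS S (x * r - y * r).
Proof. by rewrite -mulrBl; apply: pSMr. Qed.

Lemma pS_subD x1 y1 x2 y2 :
  pS S (x1 - y1) -> pS S (x2 - y2) -> pS S (x1 + x2 - (y1 + y2)).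
Proof. by rewrite opprD addrACA; apply: pSD. Qed.

Lemma pS_sub_cancell s x y : S s -> pS S (s * x - s * y) -> pS S (x - y).
Proof. by rewrite -mulrBr; apply: pS_cancell. Qed.

(* [frac_eq q r] says that q.1 q.2^-1 = r.1 r.2^-1 in the right fractions of
   R/p(S): numerators agree over every common denominator. Quantifying over
   all pairs (c, d) avoids choosing one. *)
Definition frac_eq (q r : R * R) : Prop :=
  forall c d, pS S (q.2 * c - r.2 * d) -> pS S (q.1 * c - r.1 * d).

Lemma frac_eq_refl q : S q.2 -> frac_eq q q.
Proof. by move=> Sq c d /(pS_sub_cancell Sq); apply: pS_subMl. Qed.

Lemma frac_eq_sym q r : frac_eq q r -> frac_eq r q.
Proof. by move=> Eqr c d /pS_subC /Eqr /pS_subC. Qed.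

Lemma frac_eq_trans r q t : S r.2 -> frac_eq q r -> frac_eq r t -> frac_eq q t.
Proof.
move=> Sr Eqr Ert c d pcd.
have [x [y [Sx Exy]]] := ore_condr (q.2 * c) Sr.
have E1 : pS S (q.1 * (c * x) - r.1 * y).
  by apply: Eqr; rewrite mulrA Exy; apply: pS_sub_eq.
have E2 : pS S (r.1 * y - t.1 * (d * x)).
  by apply: Ert; rewrite -Exy !mulrA; apply: pS_subMr.
by apply: (pS_cancelr Sx); rewrite mulrBl -!mulrA; exact: pS_sub_trans E1 E2.
Qed.

Lemma frac_eq_add q q' r r' c d c' d' :
  frac_eq q q' -> frac_eq r r' -> q.2 * c = r.2 * d -> q'.2 * c' = r'.2 * d' ->
  frac_eq (q.1 * c + r.1 * d, q.2 * c) (q'.1 * c' + r'.1 * d', q'.2 * c').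
Proof.
move=> Eq Er E E' x y /= pxy; rewrite !mulrDl -!mulrA.
apply: pS_subD; first by apply: Eq; rewrite !mulrA.
by apply: Er; rewrite !mulrA -E -E'.
Qed.

Lemma frac_eq_mul q q' r r' t b t' b' :
  frac_eq q q' -> frac_eq r r' -> r.1 * t = q.2 * b -> r'.1 * t' = q'.2 * b' ->
  frac_eq (q.1 * b, r.2 * t) (q'.1 * b', r'.2 * t').
Proof.
move=> Eq Er E E' x y /= pxy; rewrite -!mulrA; apply: Eq.
by rewrite !mulrA -E -E' -!mulrA; apply: Er; rewrite !mulrA.
Qed.

Lemma frac_eq_opp q q' : frac_eq q q' -> frac_eq (- q.1, q.2) (- q'.1, q'.2).
Proof. by move=> Eq c d /Eq /pSN; rewrite /= !mulNr opprD. Qed.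

(* Pairs with a denominator outside S are junk; they are identified with
   (q.1, 1) so that the quotient can be taken on all of R * R. *)
Definition frac_norm (q : R * R) : R * R := if `[< S q.2 >] then q else (q.1, 1).

Lemma frac_norm_den q : S (frac_norm q).2.
Proof. by rewrite /frac_norm; case: asboolP => // _; exact: ore1. Qed.

Lemma frac_norm_id q : S q.2 -> frac_norm q = q.
Proof. by rewrite /frac_norm; case: asboolP. Qed.

Definition frac_eqv (q r : R * R) : bool := `[< frac_eq (frac_norm q) (frac_norm r) >].

Lemma frac_eqv_refl : reflexive frac_eqv.
Proof. by move=> q; apply/asboolP/frac_eq_refl/frac_norm_den. Qed.

Lemma frac_eqv_sym : symmetric frac_eqv.
Proof. by move=> q r; apply/asboolP/asboolP; apply: frac_eq_sym. Qed.

Lemma frac_eqv_trans : transitive frac_eqv.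
Proof.
move=> r q t /asboolP Eqr /asboolP Ert; apply/asboolP.
exact: frac_eq_trans (frac_norm_den r) Eqr Ert.
Qed.

Definition frac_equiv : equiv_rel (R * R) :=
  EquivRel frac_eqv frac_eqv_refl frac_eqv_sym frac_eqv_trans.

Definition frac_ring := {eq_quot frac_equiv}%qT.
HB.instance Definition _ := Choice.on frac_ring.

Local Notation frac a s := (\pi_frac_ring (a, s) : frac_ring)%qT.

Lemma frac_eqE a s b u : S s -> S u -> frac a s = frac b u <-> frac_eq (a, s) (b, u).
Proof.
by move=> Ss Su; split => [/eqmodP/asboolP | Eq]; [|apply/eqmodP/asboolP];
  rewrite /= !frac_norm_id.
Qed.

Definition frac_repr (x : frac_ring) : R * R := frac_norm (repr x).

Lemma frac_repr_den x : S (frac_repr x).2.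
Proof. exact: frac_norm_den. Qed.

Lemma frac_reprK x : frac (frac_repr x).1 (frac_repr x).2 = x.
Proof.
rewrite -[RHS]reprK; apply/eqmodP/asboolP; rewrite /= -surjective_pairing.
by rewrite frac_norm_id; [exact/frac_eq_refl/frac_norm_den | exact: frac_norm_den].
Qed.

Lemma frac_ind (P : frac_ring -> Prop) :
  (forall a s, S s -> P (frac a s)) -> forall x, P x.
Proof. by move=> Pfrac x; rewrite -(frac_reprK x); apply/Pfrac/frac_repr_den. Qed.

Lemma frac_repr_eq a s : S s -> frac_eq (frac_repr (frac a s)) (a, s).
Proof.
move=> Ss; have := frac_reprK (frac a s); rewrite [frac_repr _]surjective_pairing.
by move/frac_eqE; apply; [exact: frac_repr_den | ].
Qed.

(* a s^-1 + b u^-1 = (a c + b d) (s c)^-1 for a common right multiple s c = u d. *)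
Definition add_pair (q r : R * R) : R * R :=
  let cd := xget (0, 0) (fun cd : R * R => q.2 * cd.1 = r.2 * cd.2 /\ S (q.2 * cd.1)) in
  (q.1 * cd.1 + r.1 * cd.2, q.2 * cd.1).

Lemma add_pairP q r : S q.2 -> S r.2 -> exists c d,
  [/\ q.2 * c = r.2 * d, S (q.2 * c) & add_pair q r = (q.1 * c + r.1 * d, q.2 * c)].
Proof.
move=> Sq Sr; have [c [d [Scd E]]] := ore_common_right Sq Sr.
have [] := @xgetPex _ (0, 0) (fun cd : R * R => q.2 * cd.1 = r.2 * cd.2 /\ S (q.2 * cd.1)).
  by exists (c, d).
by move=> E' S'; do 2!eexists; split; [exact: E' | exact: S' | ].
Qed.

(* a s^-1 * b u^-1 = a b' (u t)^-1 when b t = s b', i.e. s^-1 b = b' t^-1. *)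
Definition mul_pair (q r : R * R) : R * R :=
  let tb := xget (0, 0) (fun tb : R * R => r.1 * tb.1 = q.2 * tb.2 /\ S tb.1) in
  (q.1 * tb.2, r.2 * tb.1).

Lemma mul_pairP q r : S q.2 ->
  exists t b, [/\ r.1 * t = q.2 * b, S t & mul_pair q r = (q.1 * b, r.2 * t)].
Proof.
move=> Sq; have [t [b [St E]]] := ore_condr r.1 Sq.
have [] := @xgetPex _ (0, 0) (fun tb : R * R => r.1 * tb.1 = q.2 * tb.2 /\ S tb.1).
  by exists (t, b).
by move=> E' S'; do 2!eexists; split; [exact: E' | exact: S' | ].
Qed.

Definition addq (x y : frac_ring) : frac_ring :=
  let q := add_pair (frac_repr x) (frac_repr y) in frac q.1 q.2.
Definition mulq (x y : frac_ring) : frac_ring :=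
  let q := mul_pair (frac_repr x) (frac_repr y) in frac q.1 q.2.
Definition oppq (x : frac_ring) : frac_ring := frac (- (frac_repr x).1) (frac_repr x).2.

Lemma addq_frac a s b u c d v : S s -> S u -> S v -> s * c = v -> u * d = v ->
  addq (frac a s) (frac b u) = frac (a * c + b * d) v.
Proof.
move=> Ss Su Sv Ev Ev'; rewrite /addq.
have [c' [d' [E' Sc' ->]]] :=
  add_pairP (frac_repr_den (frac a s)) (frac_repr_den (frac b u)).
apply/frac_eqE => //; rewrite -Ev.
by apply: frac_eq_add (frac_repr_eq Ss) (frac_repr_eq Su) E' _; rewrite Ev Ev'.
Qed.

Lemma mulq_frac a s b u t b' : S s -> S u -> S t -> b * t = s * b' ->
  mulq (frac a s) (frac b u) = frac (a * b') (u * t).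
Proof.
move=> Ss Su St E; rewrite /mulq.
have [t' [b'' [E' St' ->]]] := mul_pairP (frac_repr (frac b u)) (frac_repr_den (frac a s)).
apply/frac_eqE; [exact: oreM (frac_repr_den _) St' | exact: oreM | ].
exact: frac_eq_mul (frac_repr_eq Ss) (frac_repr_eq Su) E' E.
Qed.

Lemma oppq_frac a s : S s -> oppq (frac a s) = frac (- a) s.
Proof.
move=> Ss; apply/frac_eqE => //; first exact: frac_repr_den.
exact: frac_eq_opp (frac_repr_eq Ss).
Qed.

Lemma frac_expand a s c : S s -> S (s * c) -> frac a s = frac (a * c) (s * c).
Proof.
move=> Ss Ssc; apply/frac_eqE => // x y /=; rewrite -mulrA => /(pS_sub_cancell Ss) pxy.
by rewrite -mulrA; apply: pS_subMl.
Qed.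

Lemma frac_common_den x y : exists a b v, [/\ S v, x = frac a v & y = frac b v].
Proof.
elim/frac_ind: x => a s Ss; elim/frac_ind: y => b u Su.
have [c [d [Sv E]]] := ore_common_right Ss Su.
exists (a * c), (b * d), (s * c); split => //; first exact: frac_expand.
by rewrite E; apply: frac_expand => //; rewrite -E.
Qed.

Lemma addq_frac_same a b v : S v -> addq (frac a v) (frac b v) = frac (a + b) v.
Proof. by move=> Sv; rewrite (addq_frac _ _ Sv Sv Sv (mulr1 v) (mulr1 v)) !mulr1. Qed.

Lemma addqA : associative addq.
Proof.
move=> x y; have [a [b [v [Sv -> ->]]]] := frac_common_den x y.
elim/frac_ind => e w Sw; have [c [d [Svc E]]] := ore_common_right Sv Sw.
have Swd : S (w * d) by rewrite -E.
rewrite (frac_expand a Sv Svc) (frac_expand b Sv Svc) (frac_expand e Sw Swd) -E.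
by rewrite !addq_frac_same // addrA.
Qed.

Lemma addqC : commutative addq.
Proof.
move=> x y; have [a [b [v [Sv -> ->]]]] := frac_common_den x y.
by rewrite !addq_frac_same // addrC.
Qed.

Lemma add0q : left_id (frac 0 1) addq.
Proof.
elim/frac_ind => a s Ss.
by rewrite (addq_frac _ _ ore1 Ss Ss (mul1r s) (mulr1 s)) mul0r add0r mulr1.
Qed.

Lemma addNq : left_inverse (frac 0 1) oppq addq.
Proof.
elim/frac_ind => a s Ss; rewrite oppq_frac // addq_frac_same // addNr.
apply/frac_eqE => // [|c d _]; first exact: ore1.
by rewrite !mul0r; apply: pS_sub_eq.
Qed.

Lemma mulqA : associative mulq.
Proof.
elim/frac_ind => a s Ss; elim/frac_ind => b u Su; elim/frac_ind => e w Sw.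
have [t1 [b1 [St1 E1]]] := ore_condr b Ss.
have [t2 [e2 [St2 E2]]] := ore_condr e (oreM Su St1).
rewrite (mulq_frac a Ss Su St1 E1) (mulq_frac (a * b1) (oreM Su St1) Sw St2 E2).
rewrite (mulq_frac (b' := t1 * e2) b Su Sw St2); last by rewrite mulrA -E2.
rewrite (mulq_frac (b' := b1 * e2) a Ss (oreM Sw St2) ore1); last first.
  by rewrite mulr1 mulrA E1 mulrA.
by rewrite mulr1 mulrA.
Qed.

Lemma mul1q : left_id (frac 1 1) mulq.
Proof.
by elim/frac_ind => a s Ss; rewrite (mulq_frac (b' := a) 1 ore1 Ss ore1) ?mulr1 ?mul1r.
Qed.

Lemma mulq1 : right_id (frac 1 1) mulq.
Proof.
by elim/frac_ind => a s Ss; rewrite (mulq_frac (b' := 1) a Ss ore1 Ss) ?mulr1 ?mul1r.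
Qed.

Lemma mulqDl : left_distributive mulq addq.
Proof.
move=> x y; have [a [b [v [Sv -> ->]]]] := frac_common_den x y.
elim/frac_ind => e w Sw; have [t [e' [St E]]] := ore_condr e Sv.
rewrite addq_frac_same // !(mulq_frac _ Sv Sw St E) addq_frac_same ?mulrDl //.
exact: oreM.
Qed.

Lemma mulqDr : right_distributive mulq addq.
Proof.
elim/frac_ind => a s Ss y z; have [b [e [v [Sv -> ->]]]] := frac_common_den y z.
have [t1 [b1 [St1 E1]]] := ore_condr b Ss.
have [t2 [e2 [St2 E2]]] := ore_condr (e * t1) Ss.
have St : S (t1 * t2) by exact: oreM.
have Eb : b * (t1 * t2) = s * (b1 * t2) by rewrite !mulrA E1.
have Ee : e * (t1 * t2) = s * e2 by rewrite mulrA E2.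
have Ebe : (b + e) * (t1 * t2) = s * (b1 * t2 + e2) by rewrite mulrDl mulrDr Eb Ee.
rewrite addq_frac_same // (mulq_frac _ Ss Sv St Ebe) (mulq_frac _ Ss Sv St Eb).
by rewrite (mulq_frac _ Ss Sv St Ee) addq_frac_same ?mulrDr //; exact: oreM.
Qed.

HB.instance Definition _ := GRing.isZmodule.Build frac_ring addqA addqC add0q addNq.
HB.instance Definition _ :=
  GRing.Zmodule_isPzRing.Build frac_ring mulqA mul1q mulq1 mulqDl mulqDr.

Lemma fracB_same a b v : S v -> frac a v - frac b v = frac (a - b) v.
Proof. by move=> Sv; rewrite -addq_frac_same // -oppq_frac. Qed.

Lemma fracM a s b u t b' : S s -> S u -> S t -> b * t = s * b' ->
  frac a s * frac b u = frac (a * b') (u * t).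
Proof. exact: mulq_frac. Qed.

Definition frac_hom (r : R) : frac_ring := frac r 1.

Lemma frac_hom_zmod : zmod_morphism frac_hom.
Proof. by move=> a b; rewrite /frac_hom fracB_same //; exact: ore1. Qed.

Lemma frac_hom_monoid : monoid_morphism frac_hom.
Proof.
split=> // a b; rewrite /frac_hom.
by rewrite (fracM (b' := b) a ore1 ore1 ore1) ?mulr1 ?mul1r.
Qed.

HB.instance Definition _ := GRing.isZmodMorphism.Build R frac_ring frac_hom frac_hom_zmod.
HB.instance Definition _ :=
  GRing.isMonoidMorphism.Build R frac_ring frac_hom frac_hom_monoid.

Lemma frac_hom_eq0 r : frac_hom r = 0 <-> pS S r.
Proof.
rewrite /frac_hom; split => [/frac_eqE Er | pr].
  by move: (Er ore1 ore1 1 1); rewrite subrr mulr1 mul0r subr0; apply; exact: pS_zero.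
apply/frac_eqE; [exact: ore1 | exact: ore1 | move=> c d _].
by rewrite mul0r subr0; apply: pSMr.
Qed.

Lemma frac_factor a s : S s -> frac a s = frac_hom a * frac 1 s.
Proof. by move=> Ss; rewrite (fracM (b' := 1) a ore1 Ss ore1) ?mulr1. Qed.

Lemma frac_hom_invl s : S s -> frac 1 s * frac_hom s = 1.
Proof. by move=> Ss; rewrite (fracM (b' := 1) 1 Ss ore1 ore1) ?mulr1. Qed.

Lemma frac_hom_invr s : S s -> frac_hom s * frac 1 s = 1.
Proof.
move=> Ss; rewrite (fracM (b' := 1) s ore1 Ss ore1) ?mulr1 //.
by apply/frac_eqE => //; exact: ore1.
Qed.

Lemma frac_hom_S_inverting : S_inverting S frac_hom.
Proof.
by move=> s Ss; exists (frac 1 s); split; [exact: frac_hom_invr | exact: frac_hom_invl].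
Qed.

Section Lift.
Variables (Q : pzRingType) (f : {rmorphism R -> Q}).
Hypothesis Sinv : S_inverting S f.

Definition lift_pair (q : R * R) : Q := f q.1 * uinv (f q.2).

Lemma lift_pair_expand a s c :
  S s -> S (s * c) -> lift_pair (a * c, s * c) = lift_pair (a, s).
Proof.
move=> Ss Ssc; rewrite /lift_pair /= rmorphM -mulrA; congr (_ * _); apply/esym/uinv_eqr.
  exact: Sinv.
by rewrite mulrA -rmorphM; case: (uinvP (Sinv Ssc)).
Qed.

Lemma lift_pair_eq a s b u : S s -> S u -> frac_eq (a, s) (b, u) ->
  lift_pair (a, s) = lift_pair (b, u).
Proof.
move=> Ss Su Eq; have [c [d [Ssc E]]] := ore_common_right Ss Su.
have Sud : S (u * d) by rewrite -E.
rewrite -(lift_pair_expand a Ss Ssc) -(lift_pair_expand b Su Sud) /lift_pair /= E.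
congr (_ * _); apply/eqP; rewrite -subr_eq0 -rmorphB; apply/eqP.
by apply: S_inverting_pS_eq0 Sinv _; apply: Eq; rewrite /= E subrr; exact: pS_zero.
Qed.

(* The dummy [let] makes [Sinv] an argument of [frac_lift], which the
   morphism instances below depend on. *)
Definition frac_lift (x : frac_ring) : Q := let _ := Sinv in lift_pair (frac_repr x).

Lemma frac_liftE a s : S s -> frac_lift (frac a s) = f a * uinv (f s).
Proof.
move=> Ss; rewrite /frac_lift [frac_repr _]surjective_pairing.
by apply: lift_pair_eq (frac_repr_den _) Ss (frac_repr_eq Ss).
Qed.

Lemma frac_lift_zmod : zmod_morphism frac_lift.
Proof.
move=> x y; have [a [b [v [Sv -> ->]]]] := frac_common_den x y.
by rewrite fracB_same // !frac_liftE // rmorphB mulrBl.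
Qed.

Lemma frac_lift_monoid : monoid_morphism frac_lift.
Proof.
split.
  by rewrite frac_liftE; [case: (uinvP (Sinv ore1)); rewrite rmorph1 | exact: ore1].
elim/frac_ind => a s Ss; elim/frac_ind => b u Su.
have [t [b' [St E]]] := ore_condr b Ss.
have fE : f b * f t = f s * f b' by rewrite -!rmorphM E.
rewrite (fracM a Ss Su St E) !frac_liftE //; last exact: oreM.
rewrite !rmorphM uinvM; try exact: Sinv.
by rewrite -!mulrA (mulrA (uinv (f s))) (uinv_commute (Sinv Ss) (Sinv St) fE) !mulrA.
Qed.

HB.instance Definition _ := GRing.isZmodMorphism.Build frac_ring Q frac_lift frac_lift_zmod.
HB.instance Definition _ :=
  GRing.isMonoidMorphism.Build frac_ring Q frac_lift frac_lift_monoid.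

Lemma frac_liftK r : f r = frac_lift (frac_hom r).
Proof.
rewrite frac_liftE; last exact: ore1.
by rewrite (uinv_eqr (v := 1) (Sinv ore1)) ?mulr1 ?rmorph1.
Qed.

Lemma frac_lift_unique (g : {rmorphism frac_ring -> Q}) :
  (forall r, f r = g (frac_hom r)) -> forall x, g x = frac_lift x.
Proof.
move=> fg; elim/frac_ind => a s Ss.
rewrite frac_liftE // frac_factor // rmorphM -fg; congr (_ * _).
by apply/esym/uinv_eql; [exact: Sinv | rewrite fg -rmorphM frac_hom_invl ?rmorph1].
Qed.

End Lift.

Lemma frac_hom_universal : universal_S_inverting S frac_hom.
Proof.
split; first exact: frac_hom_S_inverting.
move=> Q f Sinv; exists (frac_lift Sinv); split; first exact: frac_liftK.
by move=> g fg; apply: frac_lift_unique.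
Qed.

Lemma frac_right_fraction x : exists a s v,
  [/\ S s, frac_hom s * v = 1, v * frac_hom s = 1 & x = frac_hom a * v].
Proof.
elim/frac_ind: x => a s Ss; exists a, s, (frac 1 s).
by split; [| exact: frac_hom_invr | exact: frac_hom_invl | exact: frac_factor].
Qed.

Lemma frac_left_fraction x : exists a s v,
  [/\ S s, frac_hom s * v = 1, v * frac_hom s = 1 & x = v * frac_hom a].
Proof.
elim/frac_ind: x => a s Ss; have [s' [r' [Ss' E]]] := ore_condl a Ss.
exists r', s', (frac 1 s'); split; [| exact: frac_hom_invr | exact: frac_hom_invl | ] => //.
by rewrite (fracM (b' := a) 1 Ss' ore1 Ss) // !mul1r.
Qed.

End OreSet.

Lemma universal_S_inverting_endo (R Q : pzRingType) (S : R -> Prop)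
    (f : {rmorphism R -> Q}) (g : {rmorphism Q -> Q}) :
  universal_S_inverting S f -> (forall r, g (f r) = f r) -> forall q, g q = q.
Proof.
move=> [Sinv U] gf q; have [k [_ k_uniq]] := U Q f Sinv.
have -> : g q = k q by apply: k_uniq => r; rewrite gf.
by rewrite -(k_uniq idfun).
Qed.

Lemma universal_S_inverting_isomorphic (R Q Q' : pzRingType) (S : R -> Prop)
    (f : {rmorphism R -> Q}) (f' : {rmorphism R -> Q'}) :
  universal_S_inverting S f -> universal_S_inverting S f' -> ring_isomorphic Q Q'.
Proof.
move=> Uf Uf'; have [h [hf _]] := Uf.2 Q' f' Uf'.1; have [g [gf _]] := Uf'.2 Q f Uf.1.
exists h, g => q.
  by apply: (universal_S_inverting_endo (g := g \o h) Uf) => r /=; rewrite -hf -gf.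
by apply: (universal_S_inverting_endo (g := h \o g) Uf') => r /=; rewrite -gf -hf.
Qed.

Lemma regular_ore_denominator (R : pzRingType) (T : R -> Prop) :
  ore_set T -> (forall a, T a -> regular a) -> denominator_set T.
Proof.
move=> oreT regT; split=> // r s Ts; have T1 := ore1 oreT.
split=> [rs0 | sr0]; exists 1; split => //.
  by rewrite mul1r; apply: (regT s Ts r).2.
by rewrite mulr1; apply: (regT s Ts r).1.
Qed.

Section FactorSurjective.
Variables (R A Q : pzRingType) (pi : {rmorphism R -> A}) (f : {rmorphism R -> Q}).
Hypothesis pi_surj : forall a, exists r, pi r = a.
Hypothesis ker_pi : forall r, pi r = 0 -> f r = 0.

(* As for [frac_lift], the dummy [let] makes the hypotheses arguments. *)
Definition factor (a : A) : Q :=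
  let _ := (pi_surj, ker_pi) in f (xget 0 (fun r => pi r = a)).

Lemma factorE r : factor (pi r) = f r.
Proof.
have pir : pi (xget 0 (fun r' => pi r' = pi r)) = pi r.
  exact: (@xgetPex _ 0 (fun r' => pi r' = pi r) (ex_intro _ r erefl)).
apply/eqP; rewrite -subr_eq0 -rmorphB; apply/eqP/ker_pi.
by rewrite rmorphB pir subrr.
Qed.

Lemma factor_zmod : zmod_morphism factor.
Proof.
move=> x y; have [r <-] := pi_surj x; have [r' <-] := pi_surj y.
by rewrite -rmorphB !factorE rmorphB.
Qed.

Lemma factor_monoid : monoid_morphism factor.
Proof.
split; first by rewrite -(rmorph1 pi) factorE rmorph1.
move=> x y; have [r <-] := pi_surj x; have [r' <-] := pi_surj y.
by rewrite -rmorphM !factorE rmorphM.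
Qed.

HB.instance Definition _ := GRing.isZmodMorphism.Build A Q factor factor_zmod.
HB.instance Definition _ := GRing.isMonoidMorphism.Build A Q factor factor_monoid.

End FactorSurjective.

Section QuotientByPS.
Variables (R : pzRingType) (S : R -> Prop) (A : pzRingType) (pi : {rmorphism R -> A}).
Hypothesis oreS : ore_set S.
Hypothesis pi_surj : forall a, exists r, pi r = a.
Hypothesis ker_pi : forall r, pi r = 0 <-> pS S r.
Local Notation T := (image_of pi S).

Lemma image1 : T 1.
Proof. by exists 1; split; [exact: ore1 | exact: rmorph1]. Qed.

Lemma image_ore : ore_set T.
Proof.
split.
  split; first exact: image1.
    by case=> s [Ss /ker_pi ps]; exact: (pS_disjoint oreS Ss ps).
  move=> _ _ [s [Ss <-]] [t [St <-]].
  by exists (s * t); split; [exact: oreM | exact: rmorphM].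
move=> x _ [s [Ss <-]]; have [r <-] := pi_surj x; split.
  have [s' [r' [Ss' E]]] := ore_condl oreS r Ss.
  by exists (pi s'), (pi r'); split; [exists s' | rewrite -!rmorphM E].
have [s' [r' [Ss' E]]] := ore_condr oreS r Ss.
by exists (pi s'), (pi r'); split; [exists s' | rewrite -!rmorphM E].
Qed.

Lemma image_regular a : T a -> regular a.
Proof.
case=> s [Ss <-] x; have [r <-] := pi_surj x.
by split; rewrite -rmorphM => /ker_pi ps; apply/ker_pi;
  [exact: (pS_cancell oreS Ss ps) | exact: (pS_cancelr oreS Ss ps)].
Qed.

Lemma frac_hom_ker r : pi r = 0 -> frac_hom oreS r = 0.
Proof. by move/ker_pi/(frac_hom_eq0 oreS). Qed.

Definition quotient_frac : {rmorphism A -> frac_ring oreS} := factor pi_surj frac_hom_ker.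

Lemma quotient_fracE r : quotient_frac (pi r) = frac_hom oreS r.
Proof. exact: factorE. Qed.

Lemma image_annr a : a = 0 <-> exists t, T t /\ a * t = 0.
Proof.
split=> [-> | [t [Tt at0]]]; first by exists 1; split; [exact: image1 | rewrite mul0r].
exact: (image_regular Tt a).2.
Qed.

Lemma image_annl a : a = 0 <-> exists t, T t /\ t * a = 0.
Proof.
split=> [-> | [t [Tt ta0]]]; first by exists 1; split; [exact: image1 | rewrite mulr0].
exact: (image_regular Tt a).1.
Qed.

Lemma image_localization : is_localization T quotient_frac.
Proof.
split.
- by move=> _ [s [Ss <-]]; rewrite quotient_fracE; exact: frac_hom_S_inverting.
- move=> x; have [a [s [v [Ss sv vs ->]]]] := frac_right_fraction x.
  by exists (pi a), (pi s), v; rewrite !quotient_fracE; split => //; exists s.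
- move=> x; have [a [s [v [Ss sv vs ->]]]] := frac_left_fraction x.
  by exists (pi a), (pi s), v; rewrite !quotient_fracE; split => //; exists s.
- move=> x; have [r <-] := pi_surj x.
  by rewrite quotient_fracE frac_hom_eq0 -ker_pi; exact: image_annr.
- move=> x; have [r <-] := pi_surj x.
  by rewrite quotient_fracE frac_hom_eq0 -ker_pi; exact: image_annl.
Qed.

End QuotientByPS.

Unset Implicit Arguments.

Theorem corollary4p16 (R : pzRingType) (S : R -> Prop) :
  ore_set S ->
  exists (Q : pzRingType) (f : {rmorphism R -> Q}),
    [/\ universal_S_inverting S f,
        (forall (Q2 : pzRingType) (f2 : {rmorphism R -> Q2}),
           universal_S_inverting S f2 -> ring_isomorphic Q Q2) &
        forall (A : pzRingType) (pi : {rmorphism R -> A}),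
          (forall a : A, exists r, pi r = a) ->
          (forall r, pi r = 0 <-> pS S r) ->
          [/\ denominator_set (image_of pi S),
              (forall a, image_of pi S a -> regular a) &
              exists phi : {rmorphism A -> Q},
                is_localization (image_of pi S) phi]].
Proof.
move=> oreS; exists (frac_ring oreS), (frac_hom oreS); split.
- exact: frac_hom_universal.
- by move=> Q2 f2; apply: universal_S_inverting_isomorphic (frac_hom_universal oreS).
- move=> A pi pi_surj ker_pi; split.
  + apply: regular_ore_denominator; first exact: image_ore oreS pi_surj ker_pi.
    exact: image_regular oreS pi_surj ker_pi.
  + exact: image_regular oreS pi_surj ker_pi.
  + by exists (quotient_frac oreS pi_surj ker_pi); exact: image_localization.
Qed.
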